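(* Let $B_0$ be a finite Blaschke product, $\gamma\in\mathbb D$, and $m$ a positive integer. Then there exist $\zeta^*\in\mathbb D$ and a holomorphic map $f:\mathbb D\to\mathbb D$ such that $f=B_0\tilde g$ with $\tilde g$ holomorphic on $\mathbb D$, and $f(\zeta^*+h)=\gamma+O(h^m)$ as $h\to0$.
   Context: $\mathbb D$ is the open unit disc in $\mathbb C$. *)

From Stdlib Require Import Reals List.
From Coquelicot Require Import Coquelicot.
Open Scope R_scope.

Definition in_disc (z : C) : Prop := Cmod z < 1.

Definition holomorphic_on_disc (f : C -> C) : Prop :=
  forall z : C, in_disc z -> @ex_derive C_AbsRing C_NormedModule f z.

Definition blaschke_prod (a : list C) (z : C) : C :=
  fold_right (fun ak acc => Cmult (Cdiv (Cminus z ak) (Cminus 1 (Cmult (Cconj ak) z))) acc)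
             (RtoC 1) a.

(* B is a finite Blaschke product on D:  B(z) = c * prod_k (z-a_k)/(1-conj(a_k) z)
   with |c| = 1 and all a_k in D (zeros repeated according to multiplicity). *)
Definition finite_blaschke (B : C -> C) : Prop :=
  exists (c : C) (a : list C),
    Cmod c = 1 /\ List.Forall in_disc a /\
    forall z : C, in_disc z -> B z = Cmult c (blaschke_prod a z).

From Stdlib Require Import Reals List Lra Psatz.
From Coquelicot Require Import Coquelicot.
Open Scope R_scope.

(** Write B0 = c B with |c| = 1 and B a finite Blaschke product (if B has no
    factor, f = gamma works).  Since |B| = 1 on the unit circle and B is
    Lipschitz on the closed disc, some zeta = r in [0, 1) has
    |gamma| < |w0|^m with w0 = B0(zeta) in D.  With phi_a(z) = (z - a)/(1 - conj(a) z),
    the map F = phi_(-gamma) o (k phi_(w0)^m), where k = -gamma / phi_(w0)(0)^m has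
    |k| < 1, sends the closed disc into D, satisfies F(0) = 0, and
    F(w) - gamma = O((w - w0)^m).  Then f = F o B0 works, and g = G o B0 where
    F(w) = w G(w) is read off the difference formula for Blaschke factors. *)


(** * Complex differentiability *)

Notation ex_Cderive := (@ex_derive C_AbsRing C_NormedModule).

(* Coquelicot's product and chain rules are stated over [AbsRing_NormedModule C_AbsRing],
   which is not convertible to [C_NormedModule]. *)
Lemma is_derive_C_AbsRing (f : C -> C) (z l : C) :
  @is_derive C_AbsRing C_NormedModule f z l <->
  @is_derive C_AbsRing (AbsRing_NormedModule C_AbsRing) f z l.
Proof.
  split; intros [[Hplus Hscal [M [HM Hnorm]]] Hlim];
    (split; [constructor; auto; exists M; auto | exact Hlim]).
Qed.

Lemma Cmod_sub_ge (x y : C) : Cmod x - Cmod y <= Cmod (x - y)%C.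
Proof. exact (Rle_trans _ _ _ (Rle_abs _) (@norm_triangle_inv _ C_NormedModule x y)). Qed.

Lemma is_derive_Cinv (z0 : C) : z0 <> 0%C ->
  @is_derive C_AbsRing C_NormedModule Cinv z0 (- / (z0 * z0))%C.
Proof.
  intros Hz0. split; [apply is_linear_scal_l|].
  intros x Hx [e He].
  assert (Ex : z0 = x)
    by exact (@is_filter_lim_locally_unique _ (AbsRing_NormedModule C_AbsRing) _ _ Hx).
  subst x.
  apply (@locally_le_locally_norm _ (AbsRing_NormedModule C_AbsRing)).
  assert (Hr : 0 < Cmod z0) by now apply Cmod_gt_0.
  set (r := Cmod z0) in *.
  (* The remainder is (y - z0)^2 / (y z0^2), and |y| > r/2 once |y - z0| < r/2. *)
  assert (Hdelta : 0 < Rmin (r / 2) (e * r ^ 3 / 2)).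
  { apply Rmin_pos; [lra|]. assert (0 < r ^ 3) by now apply pow_lt. nra. }
  exists (mkposreal _ Hdelta). intros y Hy. change C in y.
  change (Cmod (y - z0)%C < Rmin (r / 2) (e * r ^ 3 / 2)) in Hy.
  change (Cmod (/ y - / z0 - (y - z0) * - / (z0 * z0))%C <= e * Cmod (y - z0)%C).
  pose proof (Rmin_l (r / 2) (e * r ^ 3 / 2)). pose proof (Rmin_r (r / 2) (e * r ^ 3 / 2)).
  assert (Hy_ge : r / 2 < Cmod y).
  { pose proof (Cmod_sub_ge z0 y) as Htri.
    replace (z0 - y)%C with (- (y - z0))%C in Htri by ring. rewrite Cmod_opp in Htri.
    fold r in Htri. lra. }
  assert (Hy0 : y <> 0%C) by (intro E; rewrite E, Cmod_0 in Hy_ge; lra).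
  replace (/ y - / z0 - (y - z0) * - / (z0 * z0))%C
    with ((y - z0) * (y - z0) / (y * (z0 * z0)))%C by (field; auto).
  rewrite Cmod_div by (repeat apply Cmult_neq_0; auto).
  rewrite !Cmod_mult. fold r.
  set (d := Cmod (y - z0)%C) in *. assert (0 <= d) by apply Cmod_ge_0.
  clearbody r d. apply Rle_div_l; [apply Rmult_lt_0_compat; nra|].
  assert (d <= e * r ^ 3 / 2) by lra.
  assert (0 <= e * d * (r * r)) by (apply Rmult_le_pos; nra).
  assert (d * d <= d * (e * r ^ 3 / 2)) by (apply Rmult_le_compat_l; lra).
  assert (e * d * (r * r) * (r / 2) <= e * d * (r * r) * Cmod y) by (apply Rmult_le_compat_l; lra).
  simpl in *. nra.
Qed.

Lemma ex_Cderive_const (a z : C) : ex_Cderive (fun _ => a) z.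
Proof. apply ex_derive_const. Qed.

Lemma ex_Cderive_id (z : C) : ex_Cderive (fun x => x) z.
Proof. exists one. apply is_derive_C_AbsRing. exact (@is_derive_id C_AbsRing z). Qed.

Lemma ex_Cderive_plus (f g : C -> C) (z : C) :
  ex_Cderive f z -> ex_Cderive g z -> ex_Cderive (fun x => f x + g x)%C z.
Proof. exact (ex_derive_plus f g z). Qed.

Lemma ex_Cderive_minus (f g : C -> C) (z : C) :
  ex_Cderive f z -> ex_Cderive g z -> ex_Cderive (fun x => f x - g x)%C z.
Proof. exact (ex_derive_minus f g z). Qed.

Lemma ex_Cderive_mult (f g : C -> C) (z : C) :
  ex_Cderive f z -> ex_Cderive g z -> ex_Cderive (fun x => f x * g x)%C z.
Proof.
  intros [df Hf] [dg Hg]. apply is_derive_C_AbsRing in Hf, Hg.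
  eexists. apply is_derive_C_AbsRing. exact (is_derive_mult f g z df dg Hf Hg Cmult_comm).
Qed.

Lemma ex_Cderive_comp (f g : C -> C) (z : C) :
  ex_Cderive f (g z) -> ex_Cderive g z -> ex_Cderive (fun x => f (g x)) z.
Proof.
  intros Hf [dg Hg]. apply ex_derive_comp; [exact Hf|].
  exists dg. now apply is_derive_C_AbsRing.
Qed.

Lemma ex_Cderive_pow (f : C -> C) (n : nat) (z : C) :
  ex_Cderive f z -> ex_Cderive (fun x => f x ^ n)%C z.
Proof.
  intros Hf. induction n as [|n IH]; simpl.
  - apply ex_Cderive_const.
  - now apply ex_Cderive_mult.
Qed.

Lemma ex_Cderive_div (f g : C -> C) (z : C) : g z <> 0%C ->
  ex_Cderive f z -> ex_Cderive g z -> ex_Cderive (fun x => f x / g x)%C z.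
Proof.
  intros Hg0 Hf Hg. apply ex_Cderive_mult; [exact Hf|].
  apply (ex_Cderive_comp Cinv g); [|exact Hg].
  eexists. now apply is_derive_Cinv.
Qed.

(** * Blaschke factors *)

Definition blaschke_factor (a z : C) : C := ((z - a) / (1 - Cconj a * z))%C.

Definition blaschke_factor_slope (a z1 z2 : C) : C :=
  ((1 - a * Cconj a) / ((1 - Cconj a * z1) * (1 - Cconj a * z2)))%C.

Lemma Cmod_blaschke_identity (a z : C) :
  Cmod (1 - Cconj a * z)%C ^ 2 - Cmod (z - a)%C ^ 2 = (1 - Cmod a ^ 2) * (1 - Cmod z ^ 2).
Proof. destruct a as [a1 a2], z as [z1 z2]. rewrite !Cmod2_alt. simpl. ring. Qed.

Lemma blaschke_factor_0 (a : C) : blaschke_factor a 0 = (- a)%C.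
Proof. unfold blaschke_factor. replace (1 - Cconj a * 0)%C with (RtoC 1) by ring. field. Qed.

Lemma blaschke_factor_self (a : C) : blaschke_factor a a = 0%C.
Proof. unfold blaschke_factor. replace (a - a)%C with (RtoC 0) by ring. apply Cmult_0_l. Qed.

Lemma Cmod_blaschke_den_ge (a z : C) : Cmod z <= 1 -> 1 - Cmod a <= Cmod (1 - Cconj a * z)%C.
Proof.
  intros Hz. pose proof (Cmod_sub_ge 1 (Cconj a * z)) as H.
  rewrite Cmod_1, Cmod_mult, Cmod_conj in H.
  pose proof (Cmod_ge_0 a). pose proof (Cmod_ge_0 z). nra.
Qed.

Section BlaschkeFactor.

Variable a : C.
Hypothesis Ha : Cmod a < 1.

Lemma blaschke_den_neq0 (z : C) : Cmod z <= 1 -> (1 - Cconj a * z)%C <> 0%C.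
Proof.
  intros Hz E. pose proof (Cmod_blaschke_den_ge a z Hz) as H.
  rewrite E, Cmod_0 in H. lra.
Qed.

Lemma Cmod_blaschke_factor_sqr (z : C) : Cmod z <= 1 ->
  1 - Cmod (blaschke_factor a z) ^ 2 =
  (1 - Cmod a ^ 2) * (1 - Cmod z ^ 2) / Cmod (1 - Cconj a * z)%C ^ 2.
Proof.
  intros Hz. pose proof (blaschke_den_neq0 z Hz) as Hd.
  unfold blaschke_factor. rewrite Cmod_div by exact Hd.
  rewrite <- Cmod_blaschke_identity. apply Cmod_gt_0 in Hd. field. lra.
Qed.

Lemma Cmod_blaschke_factor_le1 (z : C) : Cmod z <= 1 -> Cmod (blaschke_factor a z) <= 1.
Proof.
  intros Hz. pose proof (Cmod_blaschke_factor_sqr z Hz) as H.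
  assert (0 <= (1 - Cmod a ^ 2) * (1 - Cmod z ^ 2) / Cmod (1 - Cconj a * z)%C ^ 2).
  { pose proof (Cmod_ge_0 a). pose proof (Cmod_ge_0 z).
    apply Rdiv_le_0_compat; [apply Rmult_le_pos; nra | apply pow_lt, Cmod_gt_0, blaschke_den_neq0; exact Hz]. }
  pose proof (Cmod_ge_0 (blaschke_factor a z)). nra.
Qed.

Lemma Cmod_blaschke_factor_lt1 (z : C) : Cmod z < 1 -> Cmod (blaschke_factor a z) < 1.
Proof.
  intros Hz. pose proof (Cmod_blaschke_factor_sqr z (Rlt_le _ _ Hz)) as H.
  assert (0 < (1 - Cmod a ^ 2) * (1 - Cmod z ^ 2) / Cmod (1 - Cconj a * z)%C ^ 2).
  { pose proof (Cmod_ge_0 a). pose proof (Cmod_ge_0 z).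
    apply Rdiv_lt_0_compat; [apply Rmult_lt_0_compat; nra | apply pow_lt, Cmod_gt_0, blaschke_den_neq0; lra]. }
  pose proof (Cmod_ge_0 (blaschke_factor a z)). nra.
Qed.

Lemma Cmod_blaschke_factor_circle (z : C) : Cmod z = 1 -> Cmod (blaschke_factor a z) = 1.
Proof.
  intros Hz. pose proof (Cmod_blaschke_factor_sqr z (Req_le _ _ Hz)) as H.
  rewrite Hz in H. pose proof (Cmod_ge_0 (blaschke_factor a z)).
  assert (Cmod (blaschke_factor a z) ^ 2 = 1) by (rewrite Rdiv_def in H; lra).
  nra.
Qed.

Lemma Cmod_blaschke_factor_le (z : C) : Cmod z <= 1 ->
  Cmod (blaschke_factor a z) * (1 - Cmod a) <= Cmod (z - a)%C.
Proof.
  intros Hz. unfold blaschke_factor. rewrite Cmod_div by now apply blaschke_den_neq0.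
  pose proof (Cmod_blaschke_den_ge a z Hz) as Hden.
  apply Rle_trans with (Cmod (z - a)%C / Cmod (1 - Cconj a * z)%C * Cmod (1 - Cconj a * z)%C).
  - apply Rmult_le_compat_l; [apply Rdiv_le_0_compat; [apply Cmod_ge_0 | lra] | exact Hden].
  - right. field. lra.
Qed.

Lemma blaschke_factor_sub (z1 z2 : C) : Cmod z1 <= 1 -> Cmod z2 <= 1 ->
  (blaschke_factor a z1 - blaschke_factor a z2)%C = ((z1 - z2) * blaschke_factor_slope a z1 z2)%C.
Proof.
  intros H1 H2. unfold blaschke_factor, blaschke_factor_slope.
  field. split; now apply blaschke_den_neq0.
Qed.

Lemma Cmod_blaschke_factor_slope_le (z1 z2 : C) : Cmod z1 <= 1 -> Cmod z2 <= 1 ->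
  Cmod (blaschke_factor_slope a z1 z2) <= (1 + Cmod a) / (1 - Cmod a).
Proof.
  intros H1 H2. unfold blaschke_factor_slope.
  rewrite Cmod_div, Cmod_mult by (apply Cmult_neq_0; now apply blaschke_den_neq0).
  replace (1 - a * Cconj a)%C with (RtoC (1 - Cmod a ^ 2))
    by (rewrite RtoC_minus, Cmod2_conj; reflexivity).
  rewrite Cmod_R, Rabs_pos_eq by (pose proof (Cmod_ge_0 a); nra).
  pose proof (Cmod_blaschke_den_ge a z1 H1). pose proof (Cmod_blaschke_den_ge a z2 H2).
  pose proof (Cmod_ge_0 a).
  replace ((1 + Cmod a) / (1 - Cmod a)) with ((1 - Cmod a ^ 2) / ((1 - Cmod a) * (1 - Cmod a)))
    by (field; lra).
  apply Rmult_le_compat_l; [nra|].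
  apply Rinv_le_contravar; [nra|]. apply Rmult_le_compat; lra.
Qed.

Lemma blaschke_factor_lipschitz (z1 z2 : C) : Cmod z1 <= 1 -> Cmod z2 <= 1 ->
  Cmod (blaschke_factor a z1 - blaschke_factor a z2)%C <= (1 + Cmod a) / (1 - Cmod a) * Cmod (z1 - z2)%C.
Proof.
  intros H1 H2. rewrite blaschke_factor_sub, Cmod_mult, Rmult_comm by assumption.
  apply Rmult_le_compat_r; [apply Cmod_ge_0 | now apply Cmod_blaschke_factor_slope_le].
Qed.

Lemma ex_Cderive_blaschke_factor (z : C) : Cmod z <= 1 -> ex_Cderive (blaschke_factor a) z.
Proof.
  intros Hz. apply ex_Cderive_div; [now apply blaschke_den_neq0 | |].
  - apply ex_Cderive_minus; [apply ex_Cderive_id | apply ex_Cderive_const].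
  - apply ex_Cderive_minus; [apply ex_Cderive_const|].
    apply ex_Cderive_mult; [apply ex_Cderive_const | apply ex_Cderive_id].
Qed.

Lemma ex_Cderive_blaschke_factor_slope (z1 z2 : C) : Cmod z1 <= 1 -> Cmod z2 <= 1 ->
  ex_Cderive (fun z => blaschke_factor_slope a z z2) z1.
Proof.
  intros H1 H2. apply ex_Cderive_div;
    [apply Cmult_neq_0; now apply blaschke_den_neq0 | apply ex_Cderive_const |].
  apply ex_Cderive_mult; [|apply ex_Cderive_const].
  apply ex_Cderive_minus; [apply ex_Cderive_const|].
  apply ex_Cderive_mult; [apply ex_Cderive_const | apply ex_Cderive_id].
Qed.

End BlaschkeFactor.

(** * Finite Blaschke products *)

Lemma blaschke_prod_cons (x : C) (a : list C) (z : C) :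
  blaschke_prod (x :: a) z = (blaschke_factor x z * blaschke_prod a z)%C.
Proof. reflexivity. Qed.

Lemma Cmod_blaschke_prod_le1 (a : list C) (z : C) :
  List.Forall in_disc a -> Cmod z <= 1 -> Cmod (blaschke_prod a z) <= 1.
Proof.
  intros Ha Hz. induction Ha as [|x a Hx Ha IH].
  - simpl. rewrite Cmod_1. lra.
  - rewrite blaschke_prod_cons, Cmod_mult.
    pose proof (Cmod_blaschke_factor_le1 x Hx z Hz).
    pose proof (Cmod_ge_0 (blaschke_factor x z)). pose proof (Cmod_ge_0 (blaschke_prod a z)). nra.
Qed.

Lemma Cmod_blaschke_prod_lt1 (x : C) (a : list C) (z : C) :
  List.Forall in_disc (x :: a) -> Cmod z < 1 -> Cmod (blaschke_prod (x :: a) z) < 1.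
Proof.
  intros Ha Hz. inversion_clear Ha as [|? ? Hx Ha']. rewrite blaschke_prod_cons, Cmod_mult.
  pose proof (Cmod_blaschke_factor_lt1 x Hx z Hz).
  pose proof (Cmod_blaschke_prod_le1 a z Ha' (Rlt_le _ _ Hz)).
  pose proof (Cmod_ge_0 (blaschke_factor x z)). pose proof (Cmod_ge_0 (blaschke_prod a z)). nra.
Qed.

Lemma Cmod_blaschke_prod_circle (a : list C) (z : C) :
  List.Forall in_disc a -> Cmod z = 1 -> Cmod (blaschke_prod a z) = 1.
Proof.
  intros Ha Hz. induction Ha as [|x a Hx Ha IH].
  - apply Cmod_1.
  - rewrite blaschke_prod_cons, Cmod_mult, IH, Cmod_blaschke_factor_circle by assumption. ring.
Qed.

Definition blaschke_lipschitz_const (a : list C) : R :=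
  fold_right (fun x L => (1 + Cmod x) / (1 - Cmod x) + L) 0 a.

Lemma blaschke_lipschitz_const_ge0 (a : list C) : List.Forall in_disc a -> 0 <= blaschke_lipschitz_const a.
Proof.
  intros Ha. induction Ha as [|x a Hx Ha IH]; simpl; [lra|].
  unfold in_disc in Hx. pose proof (Cmod_ge_0 x).
  assert (0 <= (1 + Cmod x) / (1 - Cmod x)) by (apply Rdiv_le_0_compat; lra). lra.
Qed.

Lemma blaschke_prod_lipschitz (a : list C) (z1 z2 : C) :
  List.Forall in_disc a -> Cmod z1 <= 1 -> Cmod z2 <= 1 ->
  Cmod (blaschke_prod a z1 - blaschke_prod a z2)%C <= blaschke_lipschitz_const a * Cmod (z1 - z2)%C.
Proof.
  intros Ha H1 H2. induction Ha as [|x a Hx Ha IH]; simpl blaschke_lipschitz_const.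
  - replace (blaschke_prod nil z1 - blaschke_prod nil z2)%C with (RtoC 0) by (simpl; ring).
    rewrite Cmod_0. lra.
  - rewrite !blaschke_prod_cons.
    replace (blaschke_factor x z1 * blaschke_prod a z1 - blaschke_factor x z2 * blaschke_prod a z2)%C
      with ((blaschke_factor x z1 - blaschke_factor x z2) * blaschke_prod a z1
            + blaschke_factor x z2 * (blaschke_prod a z1 - blaschke_prod a z2))%C by ring.
    eapply Rle_trans; [apply Cmod_triangle|]. rewrite !Cmod_mult.
    pose proof (blaschke_factor_lipschitz x Hx z1 z2 H1 H2).
    pose proof (Cmod_blaschke_factor_le1 x Hx z2 H2).
    pose proof (Cmod_blaschke_prod_le1 a z1 Ha H1).
    pose proof (Cmod_ge_0 (blaschke_factor x z1 - blaschke_factor x z2)%C).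
    pose proof (Cmod_ge_0 (blaschke_prod a z1 - blaschke_prod a z2)%C).
    pose proof (Cmod_ge_0 (blaschke_prod a z1)). pose proof (Cmod_ge_0 (blaschke_factor x z2)).
    nra.
Qed.

Lemma ex_Cderive_blaschke_prod (a : list C) (z : C) :
  List.Forall in_disc a -> Cmod z <= 1 -> ex_Cderive (blaschke_prod a) z.
Proof.
  intros Ha Hz. induction Ha as [|x a Hx Ha IH].
  - apply ex_Cderive_const.
  - apply ex_Cderive_mult; [now apply ex_Cderive_blaschke_factor | exact IH].
Qed.

Lemma Cmod_blaschke_prod_radial_ge (a : list C) (r : R) : List.Forall in_disc a -> 0 <= r <= 1 ->
  1 - blaschke_lipschitz_const a * (1 - r) <= Cmod (blaschke_prod a r).
Proof.
  intros Ha Hr.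
  assert (Hr1 : Cmod (RtoC r) <= 1) by (rewrite Cmod_R, Rabs_pos_eq; lra).
  pose proof (blaschke_prod_lipschitz a 1 r Ha (Req_le _ _ Cmod_1) Hr1) as Hlip.
  rewrite <- RtoC_minus, Cmod_R, Rabs_pos_eq in Hlip by lra.
  pose proof (Cmod_sub_ge (blaschke_prod a 1) (blaschke_prod a r)) as Htri.
  rewrite (Cmod_blaschke_prod_circle a 1 Ha Cmod_1) in Htri. lra.
Qed.

Lemma pow_ge_Bernoulli (x : R) (n : nat) : 0 <= x -> 1 - INR n * (1 - x) <= x ^ n.
Proof.
  intros Hx. induction n as [|n IH]; [simpl; lra|].
  rewrite S_INR. change (x ^ S n) with (x * x ^ n). pose proof (pos_INR n).
  assert (0 <= x * (x ^ n - (1 - INR n * (1 - x)))) by (apply Rmult_le_pos; lra).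
  assert (0 <= INR n * ((1 - x) * (1 - x))) by (apply Rmult_le_pos; [lra | apply Rle_0_sqr]).
  nra.
Qed.

Lemma blaschke_prod_radial_pow_gt (a : list C) (rho : R) (m : nat) :
  List.Forall in_disc a -> 0 <= rho < 1 ->
  exists r : R, 0 <= r < 1 /\ rho < Cmod (blaschke_prod a r) ^ m.
Proof.
  intros Ha Hrho.
  pose proof (blaschke_lipschitz_const_ge0 a Ha) as HL.
  pose proof (fun r => Cmod_blaschke_prod_radial_ge a r Ha) as Hge.
  set (L := blaschke_lipschitz_const a) in *. clearbody L.
  pose proof (pos_INR m) as Hm.
  assert (Hden : 0 < 2 * (INR m * L + L + 1)) by nra.
  set (t := (1 - rho) / (2 * (INR m * L + L + 1))).
  assert (Ht : t * (2 * (INR m * L + L + 1)) = 1 - rho) by (unfold t; field; lra).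
  assert (Ht0 : 0 < t) by (unfold t; apply Rdiv_lt_0_compat; lra).
  clearbody t.
  assert (HmLt : 0 <= INR m * L * t) by (apply Rmult_le_pos; [apply Rmult_le_pos|]; lra).
  assert (0 <= L * t) by (apply Rmult_le_pos; lra).
  (* |B(1 - t)|^m >= (1 - L t)^m >= 1 - m L t by Bernoulli, and m L t < (1 - rho) / 2. *)
  exists (1 - t). split; [lra|].
  specialize (Hge (1 - t) ltac:(split; lra)). replace (1 - (1 - t)) with t in Hge by ring.
  assert (HLt : 0 <= 1 - L * t) by lra.
  pose proof (pow_ge_Bernoulli (1 - L * t) m HLt).
  pose proof (pow_incr (1 - L * t) (Cmod (blaschke_prod a (RtoC (1 - t)))) m (conj HLt Hge)).
  nra.
Qed.

(** * The outer map *)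

Fixpoint Cgeom_sum (x y : C) (n : nat) : C :=
  match n with
  | O => 0%C
  | S n => (x ^ n + y * Cgeom_sum x y n)%C
  end.

Lemma Cpow_sub_Cpow (x y : C) (n : nat) : (x ^ n - y ^ n)%C = ((x - y) * Cgeom_sum x y n)%C.
Proof.
  induction n as [|n IH]; simpl; [ring|].
  transitivity ((x - y) * x ^ n + y * (x ^ n - y ^ n))%C; [ring|].
  rewrite IH. ring.
Qed.

Lemma ex_Cderive_Cgeom_sum (f : C -> C) (y : C) (n : nat) (z : C) :
  ex_Cderive f z -> ex_Cderive (fun x => Cgeom_sum (f x) y n) z.
Proof.
  intros Hf. induction n as [|n IH]; simpl; [apply ex_Cderive_const|].
  apply ex_Cderive_plus; [now apply ex_Cderive_pow|].
  apply ex_Cderive_mult; [apply ex_Cderive_const | exact IH].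
Qed.

Section OuterMap.

Variables (w0 gamma : C) (m : nat).
Hypothesis Hw0 : Cmod w0 < 1.
Hypothesis Hgamma : Cmod gamma < 1.
Hypothesis Hgamma_w0 : Cmod gamma < Cmod w0 ^ m.

(* Chosen so that [outer_pow 0 = - gamma], hence [outer_map 0 = 0]. *)
Definition outer_coef : C := (- gamma / blaschke_factor w0 0 ^ m)%C.

Definition outer_pow (w : C) : C := (outer_coef * blaschke_factor w0 w ^ m)%C.

Definition outer_map (w : C) : C := blaschke_factor (- gamma) (outer_pow w).

(* [outer_map w / w], written without division so that it is visibly holomorphic at 0. *)
Definition outer_map_quot (w : C) : C :=
  (blaschke_factor_slope (- gamma) (outer_pow w) (outer_pow 0) * outer_coef
   * blaschke_factor_slope w0 w 0 * Cgeom_sum (blaschke_factor w0 w) (blaschke_factor w0 0) m)%C.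

Let Hgamma_opp : Cmod (- gamma)%C < 1.
Proof. now rewrite Cmod_opp. Qed.

Lemma Cmod_blaschke_factor_0_pow : Cmod (blaschke_factor w0 0 ^ m)%C = Cmod w0 ^ m.
Proof. now rewrite Cmod_pow, blaschke_factor_0, Cmod_opp. Qed.

Lemma blaschke_factor_0_pow_neq0 : (blaschke_factor w0 0 ^ m)%C <> 0%C.
Proof.
  intros E. pose proof Cmod_blaschke_factor_0_pow as H.
  rewrite E, Cmod_0 in H. pose proof (Cmod_ge_0 gamma). lra.
Qed.

Lemma Cmod_outer_coef_lt1 : Cmod outer_coef < 1.
Proof.
  unfold outer_coef. rewrite Cmod_div by exact blaschke_factor_0_pow_neq0.
  rewrite Cmod_opp, Cmod_blaschke_factor_0_pow.
  pose proof (Cmod_ge_0 gamma). apply Rlt_div_l; lra.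
Qed.

Lemma outer_pow_0 : outer_pow 0 = (- gamma)%C.
Proof.
  unfold outer_pow, outer_coef. field. exact blaschke_factor_0_pow_neq0.
Qed.

Lemma Cmod_outer_pow_le (w : C) : Cmod w <= 1 ->
  Cmod (outer_pow w) <= Cmod (blaschke_factor w0 w) ^ m.
Proof.
  intros Hw. unfold outer_pow. rewrite Cmod_mult, Cmod_pow.
  pose proof Cmod_outer_coef_lt1. pose proof (Cmod_ge_0 (blaschke_factor w0 w)).
  assert (0 <= Cmod (blaschke_factor w0 w) ^ m) by now apply pow_le.
  nra.
Qed.

Lemma Cmod_outer_pow_lt1 (w : C) : Cmod w <= 1 -> Cmod (outer_pow w) < 1.
Proof.
  intros Hw. unfold outer_pow. rewrite Cmod_mult, Cmod_pow.
  pose proof Cmod_outer_coef_lt1. pose proof (Cmod_ge_0 outer_coef).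
  pose proof (Cmod_blaschke_factor_le1 w0 Hw0 w Hw) as Hle.
  pose proof (pow_incr _ _ m (conj (Cmod_ge_0 (blaschke_factor w0 w)) Hle)).
  pose proof (pow_le (Cmod (blaschke_factor w0 w)) m (Cmod_ge_0 _)).
  rewrite pow1 in *. nra.
Qed.

Lemma Cmod_outer_map_lt1 (w : C) : Cmod w <= 1 -> Cmod (outer_map w) < 1.
Proof.
  intros Hw. apply Cmod_blaschke_factor_lt1; [exact Hgamma_opp | now apply Cmod_outer_pow_lt1].
Qed.

Lemma outer_map_error (w : C) : Cmod w <= 1 ->
  Cmod (outer_map w - gamma)%C <=
  (1 + Cmod gamma) / (1 - Cmod gamma) / (1 - Cmod w0) ^ m * Cmod (w - w0)%C ^ m.
Proof.
  intros Hw.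
  assert (Hu : Cmod (outer_pow w) <= 1) by (apply Rlt_le, Cmod_outer_pow_lt1, Hw).
  assert (Hgamma_0 : gamma = blaschke_factor (- gamma) 0) by (rewrite blaschke_factor_0; ring).
  unfold outer_map. rewrite Hgamma_0 at 2.
  eapply Rle_trans;
    [apply blaschke_factor_lipschitz; [exact Hgamma_opp | exact Hu | rewrite Cmod_0; lra]|].
  rewrite Cmod_opp. replace (outer_pow w - 0)%C with (outer_pow w) by ring.
  pose proof (Cmod_ge_0 gamma).
  assert (HE : 0 < (1 - Cmod w0) ^ m) by (apply pow_lt; lra).
  replace ((1 + Cmod gamma) / (1 - Cmod gamma) / (1 - Cmod w0) ^ m * Cmod (w - w0)%C ^ m)
    with ((1 + Cmod gamma) / (1 - Cmod gamma) * (Cmod (w - w0)%C ^ m / (1 - Cmod w0) ^ m))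
    by (field; lra).
  apply Rmult_le_compat_l; [apply Rdiv_le_0_compat; lra|].
  apply Rle_trans with (Cmod (blaschke_factor w0 w) ^ m); [now apply Cmod_outer_pow_le|].
  apply Rle_div_r; [exact HE|]. rewrite <- Rpow_mult_distr. apply pow_incr. split.
  - apply Rmult_le_pos; [apply Cmod_ge_0 | lra].
  - now apply Cmod_blaschke_factor_le.
Qed.

Lemma outer_map_factor (w : C) : Cmod w <= 1 -> outer_map w = (w * outer_map_quot w)%C.
Proof.
  intros Hw.
  assert (H0 : Cmod (RtoC 0) <= 1) by (rewrite Cmod_0; lra).
  assert (Hmap0 : outer_map 0 = 0%C) by (unfold outer_map; rewrite outer_pow_0; apply blaschke_factor_self).
  assert (Hpow : (outer_pow w - outer_pow 0)%C =
    (w * (outer_coef * blaschke_factor_slope w0 w 0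
          * Cgeom_sum (blaschke_factor w0 w) (blaschke_factor w0 0) m))%C).
  { unfold outer_pow.
    replace (outer_coef * blaschke_factor w0 w ^ m - outer_coef * blaschke_factor w0 0 ^ m)%C
      with (outer_coef * (blaschke_factor w0 w ^ m - blaschke_factor w0 0 ^ m))%C by ring.
    rewrite Cpow_sub_Cpow, blaschke_factor_sub by assumption. ring. }
  transitivity (outer_map w - outer_map 0)%C; [rewrite Hmap0; ring|].
  unfold outer_map at 1 2.
  rewrite blaschke_factor_sub, Hpow by (exact Hgamma_opp || (apply Rlt_le, Cmod_outer_pow_lt1; assumption)).
  unfold outer_map_quot. ring.
Qed.

Lemma ex_Cderive_outer_pow (w : C) : Cmod w <= 1 -> ex_Cderive outer_pow w.
Proof.
  intros Hw. apply ex_Cderive_mult; [apply ex_Cderive_const|].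
  apply ex_Cderive_pow. now apply ex_Cderive_blaschke_factor.
Qed.

Lemma ex_Cderive_outer_map (w : C) : Cmod w <= 1 -> ex_Cderive outer_map w.
Proof.
  intros Hw. apply (ex_Cderive_comp (blaschke_factor (- gamma)) outer_pow).
  - apply ex_Cderive_blaschke_factor; [exact Hgamma_opp|]. now apply Rlt_le, Cmod_outer_pow_lt1.
  - now apply ex_Cderive_outer_pow.
Qed.

Lemma ex_Cderive_outer_map_quot (w : C) : Cmod w <= 1 -> ex_Cderive outer_map_quot w.
Proof.
  intros Hw. assert (H0 : Cmod (RtoC 0) <= 1) by (rewrite Cmod_0; lra).
  apply ex_Cderive_mult; [apply ex_Cderive_mult; [apply ex_Cderive_mult|]|].
  - apply (ex_Cderive_comp (fun u => blaschke_factor_slope (- gamma) u (outer_pow 0)) outer_pow);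
      [|now apply ex_Cderive_outer_pow].
    apply ex_Cderive_blaschke_factor_slope; [exact Hgamma_opp | ..];
      now apply Rlt_le, Cmod_outer_pow_lt1.
  - apply ex_Cderive_const.
  - now apply ex_Cderive_blaschke_factor_slope.
  - apply ex_Cderive_Cgeom_sum. now apply ex_Cderive_blaschke_factor.
Qed.

End OuterMap.

Lemma holomorphic_interpolation (W : C -> C) (zeta gamma : C) (m : nat) (L : R) :
  holomorphic_on_disc W -> (forall z, in_disc z -> Cmod (W z) <= 1) ->
  (forall z, in_disc z -> Cmod (W z - W zeta)%C <= L * Cmod (z - zeta)%C) ->
  Cmod (W zeta) < 1 -> in_disc gamma -> Cmod gamma < Cmod (W zeta) ^ m ->
  exists (f g : C -> C) (K : R),
    holomorphic_on_disc f /\ (forall z, in_disc z -> in_disc (f z)) /\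
    holomorphic_on_disc g /\ (forall z, in_disc z -> f z = (W z * g z)%C) /\
    (forall z, in_disc z -> Cmod (f z - gamma)%C <= K * Cmod (z - zeta)%C ^ m).
Proof.
  intros HW HW1 HWlip Hw0 Hgamma Hgamma_w0.
  exists (fun z => outer_map (W zeta) gamma m (W z)), (fun z => outer_map_quot (W zeta) gamma m (W z)),
    ((1 + Cmod gamma) / (1 - Cmod gamma) / (1 - Cmod (W zeta)) ^ m * L ^ m).
  repeat split.
  - intros z Hz. apply (ex_Cderive_comp (outer_map (W zeta) gamma m)); [|now apply HW].
    now apply ex_Cderive_outer_map, HW1.
  - intros z Hz. now apply Cmod_outer_map_lt1, HW1.
  - intros z Hz. apply (ex_Cderive_comp (outer_map_quot (W zeta) gamma m)); [|now apply HW].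
    now apply ex_Cderive_outer_map_quot, HW1.
  - intros z Hz. now apply outer_map_factor, HW1.
  - intros z Hz. eapply Rle_trans; [now apply outer_map_error, HW1|].
    pose proof (Cmod_ge_0 gamma). unfold in_disc in Hgamma.
    rewrite Rmult_assoc, <- Rpow_mult_distr.
    apply Rmult_le_compat_l; [apply Rdiv_le_0_compat; [apply Rdiv_le_0_compat|]; try lra|].
    + apply pow_lt. lra.
    + apply pow_incr. split; [apply Cmod_ge_0 | now apply HWlip].
Qed.

Lemma blaschke_interpolation (c a0 : C) (a : list C) (gamma : C) (m : nat) :
  Cmod c = 1 -> List.Forall in_disc (a0 :: a) -> in_disc gamma ->
  exists (zeta : C) (f g : C -> C) (K : R),
    in_disc zeta /\ holomorphic_on_disc f /\ (forall z, in_disc z -> in_disc (f z)) /\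
    holomorphic_on_disc g /\ (forall z, in_disc z -> f z = (c * blaschke_prod (a0 :: a) z * g z)%C) /\
    (forall z, in_disc z -> Cmod (f z - gamma)%C <= K * Cmod (z - zeta)%C ^ m).
Proof.
  intros Hc Ha Hgamma. set (B := blaschke_prod (a0 :: a)).
  assert (HcB : forall z, Cmod (c * B z)%C = Cmod (B z)) by (intros; rewrite Cmod_mult, Hc; ring).
  assert (Hgamma0 : 0 <= Cmod gamma < 1) by (split; [apply Cmod_ge_0 | exact Hgamma]).
  destruct (blaschke_prod_radial_pow_gt (a0 :: a) (Cmod gamma) m Ha Hgamma0) as (r & Hr & Hgr).
  assert (Hr1 : Cmod (RtoC r) < 1) by (rewrite Cmod_R, Rabs_pos_eq; lra).
  destruct (holomorphic_interpolation (fun z => c * B z)%C r gamma m (blaschke_lipschitz_const (a0 :: a)))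
    as (f & g & K & Hf & Hf1 & Hg & Hfg & Herr).
  - intros z Hz. apply ex_Cderive_mult; [apply ex_Cderive_const|].
    apply ex_Cderive_blaschke_prod; [exact Ha | apply Rlt_le, Hz].
  - intros z Hz. rewrite HcB. apply Cmod_blaschke_prod_le1; [exact Ha | apply Rlt_le, Hz].
  - intros z Hz. replace (c * B z - c * B r)%C with (c * (B z - B r))%C by ring.
    rewrite Cmod_mult, Hc, Rmult_1_l.
    apply blaschke_prod_lipschitz; [exact Ha | apply Rlt_le, Hz | apply Rlt_le, Hr1].
  - rewrite HcB. now apply Cmod_blaschke_prod_lt1.
  - exact Hgamma.
  - rewrite HcB. exact Hgr.
  - now exists r, f, g, K.
Qed.

Theorem mainTheorem9 (B0 : C -> C) (gamma : C) (m : nat) :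
  finite_blaschke B0 -> in_disc gamma -> (0 < m)%nat ->
  exists (zeta : C) (f g : C -> C),
    in_disc zeta /\
    holomorphic_on_disc f /\
    (forall z : C, in_disc z -> in_disc (f z)) /\
    holomorphic_on_disc g /\
    (forall z : C, in_disc z -> f z = Cmult (B0 z) (g z)) /\
    (* f(zeta + h) = gamma + O(h^m) as h -> 0 *)
    (exists (K delta : R), 0 < delta /\
       forall h : C, Cmod h < delta -> in_disc (Cplus zeta h) ->
         Cmod (Cminus (f (Cplus zeta h)) gamma) <= K * (Cmod h) ^ m).
Proof.
  intros (c & a & Hc & Ha & HB0) Hgamma _.
  destruct a as [|a0 a].
  - exists 0%C, (fun _ => gamma), (fun _ => (gamma / c)%C).
    assert (Hc0 : c <> 0%C) by (intro E; rewrite E, Cmod_0 in Hc; lra).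
    repeat split.
    + unfold in_disc. rewrite Cmod_0. lra.
    + intros z _. apply ex_Cderive_const.
    + intros z _. exact Hgamma.
    + intros z _. apply ex_Cderive_const.
    + intros z Hz. rewrite HB0 by exact Hz. simpl. field. exact Hc0.
    + exists 0, 1. split; [lra|]. intros h _ _.
      replace (gamma - gamma)%C with (RtoC 0) by ring. rewrite Cmod_0. lra.
  - destruct (blaschke_interpolation c a0 a gamma m Hc Ha Hgamma)
      as (zeta & f & g & K & Hzeta & Hf & Hf1 & Hg & Hfg & Herr).
    exists zeta, f, g. repeat split; try assumption.
    + intros z Hz. rewrite Hfg, HB0 by exact Hz. reflexivity.
    + exists K, 1. split; [lra|]. intros h _ Hh.
      replace h with (zeta + h - zeta)%C at 2 by ring. now apply Herr.
Qed.
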